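(* Let $P,C$ be causal stable systems on $\mathcal{L}_{2e+}^n$ such that $P\#C$ is well-posed and the single-loop feedback system $P\#C|_{e_2=0}$ is stable, and assume $\theta(P)+\theta(C)\le\pi$. Let $G:e_1\mapsto y_1$ be the closed-loop map of $P\#C|_{e_2=0}$. Then $$\theta(G)\le\max\{\theta(P),\theta(C)\}.$$
   Context: For $n\ge1$, $\mathcal{L}_2^n$ is the set of measurable $u:\mathbb{R}\to\mathbb{R}^n$ with $\|u\|_2^2=\int|u(t)|^2dt<\infty$, inner product $\langle u,v\rangle=\int u(t)^Tv(t)\,dt$; $\mathcal{L}_{2+}=\{u\in\mathcal{L}_2:u(t)=0\ \text{for}\ t<0\}$. For $T\ge0$, $(\Gamma_Tu)(t)=u(t)$ for $t\le T$, $0$ for $t>T$; $\mathcal{L}_{2e+}=\{u:\Gamma_Tu\in\mathcal{L}_{2+}\ \forall T\ge0\}$. A system is an operator $P:\mathcal{L}_{2e+}\to\mathcal{L}_{2e+}$ with $P0=0$, $P\ne0$; causal if $\Gamma_TP=\Gamma_TP\Gamma_T$ for all $T\ge 0$; a causal system is stable if $Pu\in\mathcal{L}_{2+}$ for all $u\in\mathcal{L}_{2+}$ and $\sup_{0\ne u\in\mathcal{L}_{2+}}\|Pu\|_2/\|u\|_2<\infty$. The singular angle $\theta(P)\in[0,\pi]$ is given by $\cos\theta(P)=\inf\{\langle u,Pu\rangle/(\|u\|_2\|Pu\|_2):0\neq u\in\mathcal{L}_{2+},\ Pu\ne0\}$. The feedback system $P\#C$: $u_1=e_1-y_2$, $u_2=e_2+y_1$,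 $y_1=Pu_1$, $y_2=Cu_2$; well-posed if $(u_1,u_2)\mapsto(u_1+Cu_2,\ u_2-Pu_1)$ has a causal inverse on $\mathcal{L}_{2e+}\times\mathcal{L}_{2e+}$. $P\#C|_{e_2=0}$ is the loop with $e_2=0$; it is stable if there is $c>0$ with $\|\Gamma_T(u_1,u_2)\|_2\le c\|\Gamma_Te\|_2$ for all $T\ge0$ and all $e=(e_1,0)$, $e_1\in\mathcal{L}_{2e+}$. *)

From HB Require Import structures.
From mathcomp Require Import all_boot all_order all_algebra.
From mathcomp Require Import all_classical all_reals all_analysis.
Set Implicit Arguments. Unset Strict Implicit. Unset Printing Implicit Defensive.
Import Order.TTheory GRing.Theory Num.Theory.
Import numFieldNormedType.Exports.
Local Open Scope classical_set_scope.
Local Open Scope ring_scope.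

Section Signals.
Variables (R : realType) (n : nat).

Definition signal := R -> 'rV[R]_n.
Definition sig0 : signal := fun _ => 0.

Definition sqn (x : 'rV[R]_n) : R := \sum_(i < n) (x 0 i) ^+ 2.
Definition dotv (x y : 'rV[R]_n) : R := \sum_(i < n) x 0 i * y 0 i.

(* equality of signals almost everywhere (L2 elements are classes) *)
Definition eqae (u v : signal) : Prop :=
  (@lebesgue_measure R).-negligible [set t | u t <> v t].

Definition L2 (u : signal) : Prop :=
  (forall i : 'I_n, measurable_fun setT (fun t => u t 0 i)) /\
  (\int[@lebesgue_measure R]_(t in setT) (sqn (u t))%:E < +oo)%E.

Definition L2plus (u : signal) : Prop :=
  L2 u /\ (@lebesgue_measure R).-negligible [set t | t < 0 /\ u t <> 0].

Definition norm2 (u : signal) : R :=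
  Num.sqrt (fine (\int[@lebesgue_measure R]_(t in setT) (sqn (u t))%:E)).

Definition ip (u v : signal) : R :=
  fine (\int[@lebesgue_measure R]_(t in setT) (dotv (u t) (v t))%:E).

Definition trunc (T : R) (u : signal) : signal :=
  fun t => if t <= T then u t else 0.

Definition L2e (u : signal) : Prop := forall T, 0 <= T -> L2plus (trunc T u).

Definition is_system (P : signal -> signal) : Prop :=
  (forall u, L2e u -> L2e (P u)) /\
  (forall u v, L2e u -> L2e v -> eqae u v -> eqae (P u) (P v)) /\
  eqae (P sig0) sig0 /\
  ~ (forall u, L2e u -> eqae (P u) sig0).

Definition causal (P : signal -> signal) : Prop :=
  is_system P /\
  forall T u, 0 <= T -> L2e u ->
    eqae (trunc T (P u)) (trunc T (P (trunc T u))).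

Definition stable (P : signal -> signal) : Prop :=
  causal P /\
  (forall u, L2plus u -> L2plus (P u)) /\
  exists c : R, forall u, L2plus u -> ~ eqae u sig0 ->
    norm2 (P u) / norm2 u <= c.

Definition angle_set (P : signal -> signal) : set R :=
  [set r | exists u, L2plus u /\ ~ eqae u sig0 /\ ~ eqae (P u) sig0 /\
           r = ip u (P u) / (norm2 u * norm2 (P u))].

Definition sangle (P : signal -> signal) : R := acos (inf (angle_set P)).

Definition psig := (signal * signal)%type.
Definition eqae2 (x y : psig) : Prop := eqae x.1 y.1 /\ eqae x.2 y.2.
Definition L2e2 (x : psig) : Prop := L2e x.1 /\ L2e x.2.
Definition trunc2 (T : R) (x : psig) : psig := (trunc T x.1, trunc T x.2).
Definition norm2p (x : psig) : R := Num.sqrt (norm2 x.1 ^+ 2 + norm2 x.2 ^+ 2).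

Definition fb_map (P C : signal -> signal) (x : psig) : psig :=
  (x.1 \+ C x.2, x.2 \- P x.1).

Definition causal_inverse (F Phi : psig -> psig) : Prop :=
  (forall x, L2e2 x -> L2e2 (Phi x)) /\
  (forall x y, L2e2 x -> L2e2 y -> eqae2 x y -> eqae2 (Phi x) (Phi y)) /\
  (forall x, L2e2 x -> eqae2 (F (Phi x)) x) /\
  (forall x, L2e2 x -> eqae2 (Phi (F x)) x) /\
  (forall T x, 0 <= T -> L2e2 x ->
     eqae2 (trunc2 T (Phi x)) (trunc2 T (Phi (trunc2 T x)))).

Definition well_posed_with (P C : signal -> signal) (Phi : psig -> psig) : Prop :=
  causal_inverse (fb_map P C) Phi.

Definition loop_e2_0_stable (Phi : psig -> psig) : Prop :=
  exists c : R, 0 < c /\ forall T e1, 0 <= T -> L2e e1 ->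
    norm2p (trunc2 T (Phi (e1, sig0))) <= c * norm2p (trunc2 T (e1, sig0)).

Definition closed_loop_G (P : signal -> signal) (Phi : psig -> psig) :
  signal -> signal := fun e1 => P (Phi (e1, sig0)).1.

End Signals.

(* Let y = G e be the output of the loop and u1 the input of P, so that y = P u1
   and e = u1 + C y.  The angle between u1 and y is at most theta(P), the angle
   between C y and y at most theta(C).  A computation with the Gram matrix of
   (u1, C y, y) shows that if two vectors make angles at most theta1 and theta2
   with y, where theta1 + theta2 <= pi, then their sum makes an angle at most
   max(theta1, theta2) with y; in the obtuse case this compares the components
   along y with the components orthogonal to y (a Schur complement of the Gram
   matrix).  Taking the supremum over e gives the bound; the angle set of G is
   nonempty because P is causal and nonzero. *)

From HB Require Import structures.
From mathcomp Require Import all_boot all_order all_algebra.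
From mathcomp Require Import all_classical all_reals all_analysis.
From mathcomp Require Import measurable_realfun.
From mathcomp.algebra_tactics Require Import ring lra.
Import Order.TTheory GRing.Theory Num.Theory.
Import numFieldNormedType.Exports.
Local Open Scope classical_set_scope.
Local Open Scope ring_scope.
Set Implicit Arguments. Unset Strict Implicit. Unset Printing Implicit Defensive.

Section Gram.
Variable R : rcfType.
Implicit Types A B Y U V W X p q c m x : R.

(* [psd2 U V W] and [psd3 A B Y X p q] say that the symmetric matrices
   [[U, V], [V, W]] and [[A, X, p], [X, B, q], [p, q, Y]] are positive
   semidefinite, i.e. are Gram matrices. *)
Definition psd2 U V W := forall a b : R, 0 <= a ^+ 2 * U + 2 * a * b * V + b ^+ 2 * W.

Definition psd3 A B Y X p q := forall a b c : R,
  0 <= a ^+ 2 * A + b ^+ 2 * B + c ^+ 2 * Y + 2 * a * b * X + 2 * a * c * p + 2 * b * c * q.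

Lemma psd2_det U V W : psd2 U V W -> [/\ 0 <= U, 0 <= W & V ^+ 2 <= U * W].
Proof.
move=> psdUW.
have U0 : 0 <= U by have := psdUW 1 0; lra.
have W0 : 0 <= W by have := psdUW 0 1; lra.
split=> //; have [W_gt0|W_le0] := ltP 0 W.
  have := psdUW W (- V).
  have -> : W ^+ 2 * U + 2 * W * - V * V + (- V) ^+ 2 * W = W * (U * W - V ^+ 2) by ring.
  by rewrite pmulr_rge0 // subr_ge0.
have W_eq0 : W = 0 by lra.
subst W; rewrite mulr0; have [->|V_neq0] := eqVneq V 0; first by rewrite expr0n.
(* for W = 0 the form is affine in b, hence unbounded below unless V = 0 *)
have := psdUW 1 (- (U + 1) / (2 * V)).
have -> : 1 ^+ 2 * U + 2 * 1 * (- (U + 1) / (2 * V)) * V + (- (U + 1) / (2 * V)) ^+ 2 * 0 = -1.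
  by field.
lra.
Qed.

Lemma psd2_cauchy_schwarz U V W : psd2 U V W -> `|V| <= Num.sqrt U * Num.sqrt W.
Proof.
case/psd2_det=> U0 W0 VUW.
by rewrite -sqrtrM // -sqrtr_sqr ler_sqrt // mulr_ge0.
Qed.

Lemma psd2_sqrt_add U V W : psd2 U V W ->
  Num.sqrt (U + 2 * V + W) <= Num.sqrt U + Num.sqrt W.
Proof.
move=> psdUW; have [U0 W0 _] := psd2_det psdUW.
have := psd2_cauchy_schwarz psdUW; rewrite ler_norml => /andP[_ VUW].
rewrite -(ger0_norm (addr_ge0 (sqrtr_ge0 U) (sqrtr_ge0 W))) -sqrtr_sqr.
by rewrite ler_sqrt ?sqr_ge0 // sqrrD !sqr_sqrtr //; lra.
Qed.

Lemma psd2_sqrt_sub U V W : psd2 U V W ->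
  (Num.sqrt U - Num.sqrt W) ^+ 2 <= U + 2 * V + W.
Proof.
move=> psdUW; have [U0 W0 _] := psd2_det psdUW.
have := psd2_cauchy_schwarz psdUW; rewrite ler_norml => /andP[VUW _].
by rewrite sqrrB !sqr_sqrtr //; lra.
Qed.

Section Psd3.
Variables A B Y X p q : R.
Hypothesis psdG : psd3 A B Y X p q.

Lemma psd3_12 : psd2 A X B.
Proof. by move=> a b; have := psdG a b 0; lra. Qed.

Lemma psd3_13 : psd2 A p Y.
Proof. by move=> a c; have := psdG a 0 c; lra. Qed.

Lemma psd3_23 : psd2 B q Y.
Proof. by move=> b c; have := psdG 0 b c; lra. Qed.

Lemma psd3_add12 : psd2 (A + 2 * X + B) (p + q) Y.
Proof. by move=> a c; have := psdG a a c; lra. Qed.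

Lemma psd3_swap12 : psd3 B A Y X q p.
Proof. by move=> a b c; have := psdG b a c; lra. Qed.

(* Y times the Gram matrix of the components of the first two vectors orthogonal
   to the third one *)
Lemma psd3_schur : 0 < Y -> psd2 (A * Y - p ^+ 2) (X * Y - p * q) (B * Y - q ^+ 2).
Proof.
move=> Y_gt0 a b; have := psdG a b (- (a * p + b * q) / Y).
set G := _ + _ + _ + _ + _ + _.
have -> : G = (a ^+ 2 * (A * Y - p ^+ 2) + 2 * a * b * (X * Y - p * q)
                + b ^+ 2 * (B * Y - q ^+ 2)) / Y.
  by rewrite /G; field; rewrite gt_eqF.
by rewrite pmulr_lge0 // invr_gt0.
Qed.

End Psd3.

Lemma ler_mulsqrt x m U : 0 <= x -> 0 <= m -> 0 <= U ->
  (x <= m * Num.sqrt U) = (x ^+ 2 <= m ^+ 2 * U).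
Proof.
move=> x0 m0 U0.
by rewrite -[x <= _]ler_sqr ?nnegrE ?mulr_ge0 ?sqrtr_ge0 // exprMn sqr_sqrtr.
Qed.

Lemma ger_mulsqrt x m U : 0 <= x -> 0 <= m -> 0 <= U ->
  (m * Num.sqrt U <= x) = (m ^+ 2 * U <= x ^+ 2).
Proof.
move=> x0 m0 U0.
by rewrite -[_ <= x]ler_sqr ?nnegrE ?mulr_ge0 ?sqrtr_ge0 // exprMn sqr_sqrtr.
Qed.

Section CosAdd.
Variables A B Y X p q : R.
Hypothesis psdG : psd3 A B Y X p q.
Local Notation S := (A + 2 * X + B).

Let A0 : 0 <= A. Proof. by case: (psd2_det (psd3_13 psdG)). Qed.
Let B0 : 0 <= B. Proof. by case: (psd2_det (psd3_23 psdG)). Qed.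
Let Y0 : 0 <= Y. Proof. by case: (psd2_det (psd3_13 psdG)). Qed.
Let S0 : 0 <= S. Proof. by case: (psd2_det (psd3_add12 psdG)). Qed.

Lemma psd3_cos_add_ge0 c c' : 0 <= c <= c' ->
  c * (Num.sqrt A * Num.sqrt Y) <= p -> c' * (Num.sqrt B * Num.sqrt Y) <= q ->
  c * (Num.sqrt S * Num.sqrt Y) <= p + q.
Proof.
move=> /andP[c0 cc'] hp hq.
have sY := sqrtr_ge0 Y; have sB := sqrtr_ge0 B.
have hS := psd2_sqrt_add (psd3_12 psdG).
have : c * (Num.sqrt S * Num.sqrt Y) <= c * ((Num.sqrt A + Num.sqrt B) * Num.sqrt Y).
  by rewrite ler_wpM2l // ler_wpM2r.
have : c * (Num.sqrt B * Num.sqrt Y) <= c' * (Num.sqrt B * Num.sqrt Y).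
  by rewrite ler_wpM2r // mulr_ge0.
lra.
Qed.

Lemma psd3_cos_add_lt0 m : 0 < m <= 1 ->
  - p <= m * (Num.sqrt A * Num.sqrt Y) -> m * (Num.sqrt B * Num.sqrt Y) <= q ->
  - (p + q) <= m * (Num.sqrt S * Num.sqrt Y).
Proof.
move=> /andP[m_gt0 m_le1]; rewrite -!sqrtrM // => hp hq.
have m0 := ltW m_gt0; have rhs0 := mulr_ge0 m0 (sqrtr_ge0 (S * Y)).
have q0 : 0 <= q by apply: le_trans hq; rewrite mulr_ge0 ?sqrtr_ge0.
have [pq0|pq_lt0] := leP 0 (p + q); first lra.
have p_lt0 : p < 0 by lra.
have [Y_eq0|Y_neq0] := eqVneq Y 0.
  by move: hp; rewrite Y_eq0 mulr0 sqrtr0 mulr0; lra.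
have Y_gt0 : 0 < Y by rewrite lt_def Y_neq0.
have psd_orth := psd3_schur psdG Y_gt0.
have [A'0 B'0 _] := psd2_det psd_orth.
set A' := A * Y - p ^+ 2 in psd_orth A'0; set B' := B * Y - q ^+ 2 in psd_orth B'0.
set X' := X * Y - p * q in psd_orth.
have SY : S * Y = (p + q) ^+ 2 + (A' + 2 * X' + B') by rewrite /A' /B' /X'; ring.
have hp2 : p ^+ 2 <= m ^+ 2 * (A * Y).
  by rewrite -(sqrrN p) -ler_mulsqrt ?mulr_ge0 // oppr_ge0 ltW.
have hq2 : m ^+ 2 * (B * Y) <= q ^+ 2 by rewrite -ger_mulsqrt ?mulr_ge0.
have m1 : 0 <= 1 - m ^+ 2 by nra.
set s := Num.sqrt (1 - m ^+ 2); have s0 : 0 <= s := sqrtr_ge0 _.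
have ss : s ^+ 2 = 1 - m ^+ 2 := sqr_sqrtr m1.
(* s and m are the sine and minus the cosine of the bounding angle; the
   conditions on p and q become bounds between components along y and
   orthogonal components *)
have hp' : s * - p <= m * Num.sqrt A'.
  by rewrite ler_mulsqrt ?mulr_ge0 ?oppr_ge0 ?(ltW p_lt0) // exprMn ss sqrrN /A'; nra.
have hq' : m * Num.sqrt B' <= s * q.
  by rewrite ger_mulsqrt ?mulr_ge0 // exprMn ss /B'; nra.
have hpq : s * - (p + q) <= m * (Num.sqrt A' - Num.sqrt B') by lra.
have lhs0 : 0 <= s * - (p + q) by rewrite mulr_ge0 // oppr_ge0 ltW.
have hpq2 : (1 - m ^+ 2) * (p + q) ^+ 2 <= m ^+ 2 * (Num.sqrt A' - Num.sqrt B') ^+ 2.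
  rewrite -ss -(sqrrN (p + q)) -!exprMn ler_sqr ?nnegrE //.
  exact: le_trans hpq.
have := psd2_sqrt_sub psd_orth; have := sqr_ge0 m.
rewrite ler_mulsqrt ?oppr_ge0 ?(ltW pq_lt0) ?mulr_ge0 // sqrrN SY; nra.
Qed.

Lemma psd3_cos_add c c' : -1 <= c <= c' -> 0 <= c + c' ->
  c * (Num.sqrt A * Num.sqrt Y) <= p -> c' * (Num.sqrt B * Num.sqrt Y) <= q ->
  c * (Num.sqrt S * Num.sqrt Y) <= p + q.
Proof.
move=> /andP[c_ge cc'] cc'0 hp hq; have [c0|c_lt0] := leP 0 c.
  by apply: (psd3_cos_add_ge0 _ hp hq); rewrite c0.
have m_range : 0 < - c <= 1 by rewrite oppr_gt0 c_lt0 lerNl.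
have hp' : - p <= - c * (Num.sqrt A * Num.sqrt Y) by rewrite mulNr lerN2.
have hq' : - c * (Num.sqrt B * Num.sqrt Y) <= q.
  by apply: le_trans hq; rewrite ler_wpM2r ?mulr_ge0 ?sqrtr_ge0 // lerNl -subr_ge0 opprK.
by have := psd3_cos_add_lt0 m_range hp' hq'; rewrite mulNr lerN2.
Qed.

End CosAdd.

Lemma psd3_cos_add_min A B Y X p q c c' : psd3 A B Y X p q ->
  -1 <= c -> -1 <= c' -> 0 <= c + c' ->
  c * (Num.sqrt A * Num.sqrt Y) <= p -> c' * (Num.sqrt B * Num.sqrt Y) <= q ->
  Num.min c c' * (Num.sqrt (A + 2 * X + B) * Num.sqrt Y) <= p + q.
Proof.
move=> psdG c_ge c'_ge cc'0 hp hq; have [cc'|c'c] := leP c c'.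
  by apply: (psd3_cos_add psdG _ cc'0 hp hq); rewrite c_ge cc'.
rewrite (addrC p) (_ : A + 2 * X + B = B + 2 * X + A); last by ring.
by apply: (psd3_cos_add (psd3_swap12 psdG) _ _ hq hp); [rewrite c'_ge ltW | rewrite addrC].
Qed.

End Gram.

Section Acos.
Variable R : realType.
Implicit Types x y : R.

Lemma ltr_acos x y : -1 <= x <= 1 -> -1 <= y <= 1 -> (acos x < acos y) = (y < x).
Proof.
move=> hx hy.
by rewrite -ltr_cos ?in_itv /= ?acos_ge0 ?acos_lepi // !acosK ?in_itv.
Qed.

Lemma ler_acos x y : -1 <= x <= 1 -> -1 <= y <= 1 -> (acos x <= acos y) = (y <= x).
Proof. by move=> hx hy; rewrite !leNgt ltr_acos. Qed.

Lemma acos_add_le_pi x y : -1 <= x <= 1 -> -1 <= y <= 1 ->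
  acos x + acos y <= pi -> 0 <= x + y.
Proof.
move=> hx hy sum_le.
have hNy : -1 <= - y <= 1 by case/andP: hy => ? ?; apply/andP; split; lra.
have : acos x <= acos (- y) by rewrite acosN //; lra.
by rewrite ler_acos //; lra.
Qed.

End Acos.

Section Vectors.
Context {R : realType} {n : nat}.
Implicit Types x y z : 'rV[R]_n.

Lemma sqn_dotv x : sqn x = dotv x x.
Proof. by apply: eq_bigr => i _; rewrite expr2. Qed.

Lemma dotvC x y : dotv x y = dotv y x.
Proof. by apply: eq_bigr => i _; rewrite mulrC. Qed.

Lemma dotvDl x y z : dotv (x + y) z = dotv x z + dotv y z.
Proof. by rewrite /dotv -big_split; apply: eq_bigr => i _; rewrite mxE mulrDl. Qed.

Lemma sqn_ge0 x : 0 <= sqn x.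
Proof. by apply: sumr_ge0 => i _; apply: sqr_ge0. Qed.

Lemma sqn0 : sqn (0 : 'rV[R]_n) = 0.
Proof. by rewrite /sqn big1 // => i _; rewrite mxE expr0n. Qed.

Lemma sqn_eq0 x : (sqn x == 0) = (x == 0).
Proof.
apply/idP/eqP => [|->]; last by rewrite sqn0.
rewrite psumr_eq0 => [/allP x0|i _]; last exact: sqr_ge0.
by apply/rowP => i; rewrite mxE; apply/eqP; have := x0 i (mem_index_enum i); rewrite sqrf_eq0.
Qed.

Lemma norm_dotv_le x y : `|dotv x y| <= sqn x + sqn y.
Proof.
rewrite /dotv /sqn -big_split /=; apply: le_trans (ler_norm_sum _ _ _) _.
by apply: ler_sum => i _; rewrite ler_norml; apply/andP; split; nra.
Qed.

Lemma sqnD_le x y : sqn (x + y) <= 2 * sqn x + 2 * sqn y.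
Proof.
rewrite /sqn !mulr_sumr -big_split /=; apply: ler_sum => i _.
by rewrite mxE; have := sqr_ge0 (x 0 i - y 0 i); nra.
Qed.

Lemma dotv_psd3 x y z :
  psd3 (dotv x x) (dotv y y) (dotv z z) (dotv x y) (dotv x z) (dotv y z).
Proof.
move=> a b c; set G := (X in 0 <= X).
have -> : G = \sum_(i < n) (a * x 0 i + b * y 0 i + c * z 0 i) ^+ 2.
  by rewrite /G /dotv !mulr_sumr -!big_split /=; apply: eq_bigr => i _; ring.
by apply: sumr_ge0 => i _; apply: sqr_ge0.
Qed.

End Vectors.

Section Signals.
Context {R : realType} {n : nat}.
Local Notation mu := (@lebesgue_measure R).
Local Notation signal := (signal R n).
Local Notation sig0 := (@sig0 R n).
Local Notation integrable f := (mu.-integrable setT (EFin \o f)).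
Implicit Types (u v w : signal) (f g : R -> R).

Definition measurable_signal u := forall i, measurable_fun setT (fun t => u t 0 i).

Lemma measurable_dotv u v : measurable_signal u -> measurable_signal v ->
  measurable_fun setT (fun t => dotv (u t) (v t)).
Proof. by move=> ms_u ms_v; apply: measurable_sum => i; apply: measurable_funM. Qed.

Lemma measurable_sqn u : measurable_signal u -> measurable_fun setT (fun t => sqn (u t)).
Proof. by move=> ms_u; apply: measurable_sum => i; apply: measurable_funX. Qed.

Lemma integrable_addr f g : integrable f -> integrable g -> integrable (fun t => f t + g t).
Proof.
move=> if_ ig; have := integrableD measurableT if_ ig.
by apply: eq_integrable => // t _ /=; rewrite EFinD.
Qed.

Lemma integrable_scaler k f : integrable f -> integrable (fun t => k * f t).
Proof.
move=> if_; have := integrableZl measurableT k if_.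
by apply: eq_integrable => // t _ /=; rewrite EFinM.
Qed.

Lemma integrable_sqn u : L2 u -> integrable (fun t => sqn (u t)).
Proof.
case=> ms_u sq_fin.
have ms : measurable_fun setT (EFin \o fun t => sqn (u t)).
  by apply/measurable_EFinP; exact: measurable_sqn.
apply/integrableP; split => //; apply: le_lt_trans sq_fin.
apply: ge0_le_integral => //.
all: by [exact: measurableT_comp | move=> t _; rewrite ?gee0_abs // lee_fin sqn_ge0].
Qed.

Lemma L2_integrable u : measurable_signal u -> integrable (fun t => sqn (u t)) -> L2 u.
Proof.
move=> ms_u /integrableP[_ sq_fin]; split => //; apply: le_lt_trans sq_fin.
have ms : measurable_fun setT (EFin \o fun t => sqn (u t)).
  by apply/measurable_EFinP; exact: measurable_sqn.
apply: ge0_le_integral => //.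
all: by [exact: measurableT_comp | move=> t _; rewrite ?gee0_abs // lee_fin sqn_ge0].
Qed.

Lemma integrable_dotv u v : L2 u -> L2 v -> integrable (fun t => dotv (u t) (v t)).
Proof.
move=> hu hv; have := integrable_addr (integrable_sqn hu) (integrable_sqn hv).
apply: le_integrable => //.
  by apply/measurable_EFinP; apply: measurable_dotv; [case: hu | case: hv].
move=> t _ /=; rewrite lee_fin (ger0_norm (addr_ge0 (sqn_ge0 _) (sqn_ge0 _))).
exact: norm_dotv_le.
Qed.

Lemma L2_add u v : L2 u -> L2 v -> L2 (u \+ v).
Proof.
move=> hu hv; have ms : measurable_signal (u \+ v).
  move=> i; rewrite (_ : (fun t => _) = (fun t => u t 0 i) \+ (fun t => v t 0 i)).
    by apply: measurable_funD; [case: hu | case: hv].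
  by apply/funext => t /=; rewrite mxE.
apply: L2_integrable => //.
have := integrable_addr (integrable_scaler 2 (integrable_sqn hu))
                         (integrable_scaler 2 (integrable_sqn hv)).
apply: le_integrable => //; first by apply/measurable_EFinP; exact: measurable_sqn.
move=> t _ /=; rewrite !ger0_norm ?lee_fin ?sqn_ge0 ?sqnD_le //.
by rewrite addr_ge0 // mulr_ge0 // sqn_ge0.
Qed.

Lemma ipE u v : ip u v = \int[mu]_t dotv (u t) (v t).
Proof. by []. Qed.

Lemma norm2E u : norm2 u = Num.sqrt (ip u u).
Proof.
by rewrite /norm2 /ip; congr (Num.sqrt (fine _)); apply: eq_integral => t _; rewrite sqn_dotv.
Qed.

Lemma ipC u v : ip u v = ip v u.
Proof. by rewrite !ipE; apply: eq_Rintegral => t _; rewrite dotvC. Qed.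

Lemma ipDl u v w : L2 u -> L2 v -> L2 w -> ip (u \+ v) w = ip u w + ip v w.
Proof.
move=> hu hv hw; rewrite !ipE -RintegralD ?integrable_dotv //.
by apply: eq_Rintegral => t _; rewrite dotvDl.
Qed.

Lemma norm2D u v : L2 u -> L2 v ->
  norm2 (u \+ v) = Num.sqrt (ip u u + 2 * ip u v + ip v v).
Proof.
move=> hu hv; have huv := L2_add hu hv.
rewrite norm2E (ipDl hu hv huv) !(ipC _ (u \+ v)) (ipDl hu hv hu) (ipDl hu hv hv).
by rewrite (ipC v u); congr Num.sqrt; ring.
Qed.

Lemma ip_psd3 u v w : L2 u -> L2 v -> L2 w ->
  psd3 (ip u u) (ip v v) (ip w w) (ip u v) (ip u w) (ip v w).
Proof.
move=> hu hv hw a b c.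
have := Rintegral_ge0 mu (D := setT) (fun t _ => dotv_psd3 (u t) (v t) (w t) a b c).
rewrite !RintegralD ?RintegralZl ?integrable_dotv //.
all: by do ?[apply: integrable_addr | apply: integrable_scaler]; apply: integrable_dotv.
Qed.

Lemma cauchy_schwarz u v : L2 u -> L2 v -> `|ip u v| <= norm2 u * norm2 v.
Proof.
move=> hu hv; rewrite !norm2E; apply: psd2_cauchy_schwarz.
exact: psd3_12 (ip_psd3 hu hv hv).
Qed.

Lemma eqae_refl u : eqae u u.
Proof. by apply: negligibleS (negligible_set0 _) => t /=. Qed.

Lemma eqae_sym u v : eqae u v -> eqae v u.
Proof. by apply: negligibleS => t /= uv vu; apply: uv. Qed.

Lemma eqae_trans u v w : eqae u v -> eqae v w -> eqae u w.
Proof.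
move=> uv vw; apply: negligibleS (negligibleU uv vw) => t /= uw.
by have [e|] := pselect (u t = v t); [right; rewrite -e | left].
Qed.

Lemma eqae_add u u' v v' : eqae u u' -> eqae v v' -> eqae (u \+ v) (u' \+ v').
Proof.
move=> uu' vv'; apply: negligibleS (negligibleU uu' vv') => t /= neq.
by have [e|] := pselect (u t = u' t); [right => e'; apply: neq; rewrite e e' | left].
Qed.

Lemma eqae_subr0 u v : eqae (u \- v) sig0 -> eqae u v.
Proof. by apply: negligibleS => t /= neq /eqP; rewrite /sig0 subr_eq0 => /eqP. Qed.

Lemma eqae_trunc T u v : eqae u v -> eqae (trunc T u) (trunc T v).
Proof. by apply: negligibleS => t /=; rewrite /trunc; case: ifP. Qed.

Lemma ip_eqae u u' v : L2 u -> L2 u' -> L2 v -> eqae u u' -> ip u v = ip u' v.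
Proof.
move=> hu hu' hv [N [mN N0 uu'N]]; congr fine; apply: ae_eq_integral => //.
- by apply/measurable_EFinP; apply: measurable_dotv; [case: hu | case: hv].
- by apply/measurable_EFinP; apply: measurable_dotv; [case: hu' | case: hv].
by exists N; split => // t /= neq; apply: uu'N => /= e; apply: neq; rewrite e.
Qed.

Lemma norm2_eqae u u' : L2 u -> L2 u' -> eqae u u' -> norm2 u = norm2 u'.
Proof.
move=> hu hu' uu'; rewrite !norm2E (ip_eqae hu hu' hu uu') ipC.
by rewrite (ip_eqae hu hu' hu' uu').
Qed.

Lemma trunc_sig0 T : trunc T sig0 = sig0.
Proof. by apply/funext => t; rewrite /trunc; case: ifP. Qed.

Lemma integral_sqn_sig0 : (\int[mu]_(t in setT) (sqn (sig0 t))%:E = 0)%E.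
Proof. by rewrite -(integral0 mu setT); apply: eq_integral => t _; rewrite sqn0. Qed.

Lemma L2plus_sig0 : L2plus sig0.
Proof.
split; last by apply: negligibleS (negligible_set0 _) => t [].
split; last by rewrite integral_sqn_sig0 ltry.
move=> i; rewrite (_ : (fun t => _) = cst 0); first exact: measurable_cst.
by apply/funext => t; rewrite mxE.
Qed.

Lemma norm2_sig0 : norm2 sig0 = 0.
Proof. by rewrite /norm2 integral_sqn_sig0 sqrtr0. Qed.

Lemma norm2_ge0 u : 0 <= norm2 u.
Proof. exact: sqrtr_ge0. Qed.

Lemma sqr_norm2 u : norm2 u ^+ 2 = \int[mu]_t sqn (u t).
Proof. by rewrite sqr_sqrtr // Rintegral_ge0 // => t _; apply: sqn_ge0. Qed.

Lemma norm2_eq0 u : L2 u -> norm2 u = 0 <-> eqae u sig0.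
Proof.
move=> hu; split => [u0|/(norm2_eqae hu L2plus_sig0.1)->]; last exact: norm2_sig0.
have [ms_u _] := hu; have ms := measurable_sqn ms_u.
have fin_sqn := integrable_fin_num measurableT (integrable_sqn hu).
have int0 : (\int[mu]_(t in setT) (sqn (u t))%:E = 0)%E.
  by rewrite -[LHS]fineK // -/(Rintegral _ _ _) -sqr_norm2 u0 expr0n.
have : (\int[mu]_(t in setT) `|(sqn (u t))%:E| = 0)%E.
  by rewrite -int0; apply: eq_integral => t _; rewrite gee0_abs // lee_fin sqn_ge0.
have mE : measurable_fun setT (EFin \o fun t => sqn (u t)) by apply/measurable_EFinP.
case/(ae_eq_integral_abs mu measurableT mE).1 => N [mN N0 uN].
exists N; split => // t /= neq; apply: uN => /= u0t; apply: neq; apply/eqP.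
by rewrite -sqn_eq0; have [/eqP] := u0t I.
Qed.

Lemma sqn_trunc_le T u t : sqn (trunc T u t) <= sqn (u t).
Proof. by rewrite /trunc; case: ifP => // _; rewrite sqn0 sqn_ge0. Qed.

Lemma measurable_trunc T u : measurable_signal u -> measurable_signal (trunc T u).
Proof.
move=> ms_u i; rewrite (_ : (fun t => _) = fun t => if t <= T then u t 0 i else 0).
  by apply: measurable_fun_ifT => //; apply: measurable_fun_ler.
by apply/funext => t; rewrite /trunc; case: ifP => // _; rewrite mxE.
Qed.

Lemma L2_trunc T u : L2 u -> L2 (trunc T u).
Proof.
move=> hu; have ms := measurable_trunc T hu.1.
apply: L2_integrable => //; apply: le_integrable (integrable_sqn hu) => //.
  by apply/measurable_EFinP; apply: measurable_sqn.
by move=> t _ /=; rewrite lee_fin !ger0_norm ?sqn_ge0 ?sqn_trunc_le.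
Qed.

Lemma L2plus_trunc T u : L2plus u -> L2plus (trunc T u).
Proof.
case=> hu neg; split; first exact: L2_trunc.
by apply: negligibleS neg => t /= [t0]; rewrite /trunc; case: ifP.
Qed.

Lemma L2plus_L2e u : L2plus u -> L2e u.
Proof. by move=> hu T _; apply: L2plus_trunc. Qed.

Lemma norm2_trunc_le T u : L2 u -> norm2 (trunc T u) <= norm2 u.
Proof.
move=> hu; rewrite -ler_sqr ?nnegrE ?norm2_ge0 // !sqr_norm2.
apply: le_Rintegral => //; [exact/integrable_sqn/L2_trunc | exact: integrable_sqn |].
by move=> t _; apply: sqn_trunc_le.
Qed.

Lemma trunc_near u t : \forall k \near \oo, trunc k%:R u t = u t.
Proof.
exists (Num.bound `|t|) => // k /= tk; rewrite /trunc ifT //.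
apply: le_trans (ler_norm t) (ltW (lt_le_trans (archi_boundP (normr_ge0 t)) _)).
by rewrite ler_nat.
Qed.

(* monotone convergence along the truncations at T = 0, 1, 2, ... *)
Lemma L2e_bounded_L2plus w K : L2e w -> (forall k : nat, norm2 (trunc k%:R w) <= K) ->
  L2plus w.
Proof.
move=> hw wK; have hk k : L2plus (trunc k%:R w) by apply: hw; apply: ler0n.
have ms_w : measurable_signal w.
  move=> i; apply: (measurable_fun_cvg (h := fun k t => trunc k%:R w t 0 i)).
    by move=> k; apply: (hk k).1.1.
  by move=> t _; apply: cvg_near_cst; near=> k; rewrite (near (trunc_near w t) k).
split; last first.
  apply: negligibleS (hk 0%N).2 => t /= [t0 wt]; split => //.
  by rewrite /trunc ifT // ltW.
split => //.
set g := fun (k : nat) t => (sqn (trunc k%:R w t))%:E.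
have mg k : measurable_fun setT (g k).
  by apply/measurable_EFinP; apply: measurable_sqn; apply: measurable_trunc.
have g0 k t : setT t -> (0 <= g k t)%E by move=> _; rewrite lee_fin sqn_ge0.
have nd_g t : setT t -> {homo g ^~ t : a b / (a <= b)%N >-> (a <= b)%E}.
  move=> _ a b ab; rewrite lee_fin /trunc.
  case: ifP => ta; last by rewrite sqn0; case: ifP => _; rewrite ?sqn0 ?sqn_ge0.
  by rewrite ifT // (le_trans ta) // ler_nat.
have -> : (\int[mu]_(t in setT) (sqn (w t))%:E =
    \int[mu]_(t in setT) limn (g ^~ t))%E.
  apply: eq_integral => t _; apply/esym/cvg_lim => //; apply: cvg_near_cst.
  by near=> k; rewrite /g (near (trunc_near w t) k).
rewrite (monotone_convergence mu measurableT mg g0 nd_g).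
apply: le_lt_trans (ltry (K ^+ 2)); apply: lime_le.
  apply: ereal_nondecreasing_is_cvgn => a b ab.
  by apply: ge0_le_integral => //; [exact: g0 | exact: mg | exact: mg | move=> t _; exact: nd_g].
apply: nearW => k; rewrite -[X in (X <= _)%E]fineK; last first.
  by apply: integrable_fin_num => //; exact: integrable_sqn (hk k).1.
rewrite lee_fin -/(Rintegral _ _ _) -sqr_norm2.
by rewrite ler_sqr ?nnegrE ?norm2_ge0 ?(le_trans (norm2_ge0 _) (wK k)).
Unshelve. all: by end_near.
Qed.

Lemma L2e_sig0 : L2e sig0.
Proof. by move=> T _; rewrite trunc_sig0; exact: L2plus_sig0. Qed.

Lemma norm2p_ge_l (x : psig R n) : norm2 x.1 <= norm2p x.
Proof.
rewrite -[leLHS]ger0_norm ?norm2_ge0 // -sqrtr_sqr ler_sqrt ?lerDl ?sqr_ge0 //.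
by rewrite addr_ge0 ?sqr_ge0.
Qed.

End Signals.

Section Systems.
Context {R : realType} {n : nat}.
Local Notation signal := (signal R n).
Local Notation sig0 := (@sig0 R n).
Implicit Types (F : signal -> signal) (u : signal).

Definition cos_sangle F : R := inf (angle_set F).

Lemma norm2_gt0 u : L2 u -> 0 < norm2 u <-> ~ eqae u sig0.
Proof.
move=> hu; rewrite lt_def norm2_ge0 andbT.
by split=> [/eqP u_neq0 /(norm2_eq0 hu)|u_neq0]; last apply/eqP => /(norm2_eq0 hu).
Qed.

Section AngleSet.
Variable F : signal -> signal.
Hypothesis hF : forall u, L2plus u -> L2plus (F u).

Lemma angle_set_bound r : angle_set F r -> -1 <= r <= 1.
Proof.
case=> u [hu [u0 [Fu0 ->]]]; have hFu := hF hu.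
have N_gt0 := mulr_gt0 ((norm2_gt0 hu.1).2 u0) ((norm2_gt0 hFu.1).2 Fu0).
rewrite -ler_norml normrM normfV (gtr0_norm N_gt0) ler_pdivrMr // mul1r.
exact: cauchy_schwarz hu.1 hFu.1.
Qed.

Lemma cos_sangle_bound : -1 <= cos_sangle F <= 1.
Proof.
have [[r Fr]|F0] := pselect (angle_set F !=set0); last first.
  rewrite /cos_sangle (_ : angle_set F = set0) ?inf0 ?lerN10 ?ler01 //.
  by apply/seteqP; split => // x Fx; apply: F0; exists x.
have lbF : lbound (angle_set F) (-1) by move=> x /angle_set_bound /andP[].
apply/andP; split; first by apply: lb_le_inf => //; exists r.
by apply: le_trans (ge_inf _ Fr) (proj2 (andP (angle_set_bound Fr))); exists (-1).
Qed.

Lemma cos_sangle_ip u : L2plus u -> cos_sangle F * (norm2 u * norm2 (F u)) <= ip u (F u).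
Proof.
move=> hu; have hFu := hF hu; have cs := cauchy_schwarz hu.1 hFu.1.
have := mulr_ge0 (norm2_ge0 u) (norm2_ge0 (F u)); rewrite le_eqVlt => /predU1P[N0|N_gt0].
  by move: cs; rewrite -N0 mulr0 normr_le0 => /eqP->.
have [u_gt0 Fu_gt0] : 0 < norm2 u /\ 0 < norm2 (F u).
  by move: N_gt0; rewrite !lt_def !norm2_ge0 mulf_eq0 negb_or => /andP[/andP[-> ->] _].
have Fr : angle_set F (ip u (F u) / (norm2 u * norm2 (F u))).
  by exists u; do !split=> //; [apply/(norm2_gt0 hu.1) | apply/(norm2_gt0 hFu.1)].
rewrite -ler_pdivlMr //; apply: ge_inf Fr.
by exists (-1) => x /angle_set_bound /andP[].
Qed.

End AngleSet.

Lemma stable_L2plus F : stable F -> forall u, L2plus u -> L2plus (F u).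
Proof. by case=> _ []. Qed.

Lemma system_eqae F u v : is_system F -> L2e u -> L2e v -> eqae u v -> eqae (F u) (F v).
Proof. by case=> _ [+ _]; apply. Qed.

Lemma system_eqae0 F u : is_system F -> L2e u -> eqae u sig0 -> eqae (F u) sig0.
Proof.
move=> sysF hu u0; apply: eqae_trans (system_eqae sysF hu L2e_sig0 u0) _.
by case: sysF => _ [_ []].
Qed.

Lemma causal_eq0 F : causal F -> (forall u, L2plus u -> eqae (F u) sig0) ->
  forall u, L2e u -> eqae (F u) sig0.
Proof.
case=> _ causF F0 u hu.
have Fk0 k : eqae (trunc k%:R (F u)) sig0.
  apply: eqae_trans (causF k%:R u (ler0n _ _) hu) _.
  by rewrite -(trunc_sig0 k%:R); apply/eqae_trunc/F0/hu.
apply: negligibleS (negligible_bigcup Fk0) => t /= Fut.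
have [k _ Fk] := trunc_near (F u) t.
by exists k => //=; rewrite Fk /=.
Qed.

End Systems.

Section Loop.
Context {R : realType} {n : nat}.
Local Notation signal := (signal R n).
Local Notation sig0 := (@sig0 R n).
Variables (P C : signal -> signal) (Phi : psig R n -> psig R n).
Hypotheses (hP : stable P) (hC : stable C) (hW : well_posed_with P C Phi)
  (hL : loop_e2_0_stable Phi).
Local Notation u1 e := (Phi (e, sig0)).1.
Local Notation u2 e := (Phi (e, sig0)).2.
Local Notation G := (closed_loop_G P Phi).
Implicit Types e : signal.

Lemma loop_signals e : L2plus e ->
  [/\ L2plus (u1 e), L2e (u2 e), eqae (u1 e \+ C (u2 e)) e & eqae (u2 e) (P (u1 e))].
Proof.
move=> he; have he0 : L2e2 (e, sig0) by split; [exact: L2plus_L2e | exact: L2e_sig0].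
case: hW => Phi_L2e [_ [FPhi _]]; have [hu1 hu2] := Phi_L2e _ he0.
have [/= eq1 eq2] := FPhi _ he0; split=> //; last exact: eqae_subr0.
(* closed-loop stability bounds the truncations of u1 by the norm of e *)
have [c [c_gt0 hc]] := hL; apply: (L2e_bounded_L2plus hu1 (K := c * norm2 e)) => k.
apply: le_trans (norm2p_ge_l (trunc2 k%:R (Phi (e, sig0)))) _.
apply: le_trans (hc k%:R e (ler0n _ _) (L2plus_L2e he)) _.
rewrite /norm2p /= trunc_sig0 norm2_sig0 expr0n addr0 sqrtr_sqr ger0_norm ?norm2_ge0 //.
by rewrite ler_pM2l //; exact: norm2_trunc_le he.1.
Qed.

Lemma closed_loop_signals e : L2plus e ->
  [/\ L2plus (u1 e), L2plus (G e), L2plus (C (G e)) & eqae e (u1 e \+ C (G e))].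
Proof.
move=> he; have [hu1 hu2 eq1 eq2] := loop_signals he.
have hG : L2plus (G e) by apply: stable_L2plus hP _ hu1.
split=> //; first exact: stable_L2plus hC _ hG.
apply: eqae_trans (eqae_sym eq1) (eqae_add (eqae_refl _) _).
by apply: system_eqae hC.1.1 hu2 (L2plus_L2e hG) eq2.
Qed.

Lemma closed_loop_angle_ge r : 0 <= cos_sangle P + cos_sangle C ->
  angle_set G r -> Num.min (cos_sangle P) (cos_sangle C) <= r.
Proof.
move=> PC0 [e [he [e0 [Ge0 ->]]]].
have [hu1 hG hCG eq_e] := closed_loop_signals he.
have hs := L2_add hu1.1 hCG.1.
have ip_e : ip e (G e) = ip (u1 e) (G e) + ip (C (G e)) (G e).
  by rewrite (ip_eqae he.1 hs hG.1 eq_e) (ipDl hu1.1 hCG.1 hG.1).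
have norm_e := norm2_eqae he.1 hs eq_e; rewrite (norm2D hu1.1 hCG.1) in norm_e.
have hp := cos_sangle_ip (stable_L2plus hP) hu1.
have hq := cos_sangle_ip (stable_L2plus hC) hG.
rewrite !norm2E in hp hq; rewrite (mulrC (Num.sqrt (ip (G e) (G e)))) (ipC (G e)) in hq.
have /andP[bP _] := cos_sangle_bound (stable_L2plus hP).
have /andP[bC _] := cos_sangle_bound (stable_L2plus hC).
have := psd3_cos_add_min (ip_psd3 hu1.1 hCG.1 hG.1) bP bC PC0 hp hq.
rewrite -norm_e -norm2E -ip_e -ler_pdivlMr //.
exact: mulr_gt0 ((norm2_gt0 he.1).2 e0) ((norm2_gt0 hG.1).2 Ge0).
Qed.

Lemma closed_loop_L2plus e : L2plus e -> L2plus (G e).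
Proof. by case/closed_loop_signals. Qed.

(* nontriviality of P: if G killed every input, so would P *)
Lemma closed_loop_angle_set_neq0 : angle_set G !=set0.
Proof.
apply: contrapT => G0.
have P0 u : L2plus u -> eqae (P u) sig0.
  move=> hu; have [u0|u_neq0] := pselect (eqae u sig0).
    exact: system_eqae0 hP.1.1 (L2plus_L2e hu) u0.
  have [hu1 hG _ eq_u] := closed_loop_signals hu.
  have Gu0 : eqae (G u) sig0.
    apply: contrapT => Gu_neq0; apply: G0.
    by exists (ip u (G u) / (norm2 u * norm2 (G u))), u.
  have CGu0 := system_eqae0 hC.1.1 (L2plus_L2e hG) Gu0.
  have eq_u1 : eqae u (u1 u).
    apply: eqae_trans eq_u _; rewrite -[X in eqae _ X](addr0 (u1 u)).
    exact: eqae_add (eqae_refl _) CGu0.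
  apply: eqae_trans Gu0.
  exact: system_eqae hP.1.1 (L2plus_L2e hu) (L2plus_L2e hu1) eq_u1.
case: hP.1.1 => _ [_ [_]]; apply; exact: causal_eq0 hP.1 P0.
Qed.

End Loop.

Theorem proposition7 (R : realType) (n : nat) (P C : signal R n -> signal R n)
  (Phi : psig R n -> psig R n) :
  (1 <= n)%N ->
  stable P -> stable C ->
  well_posed_with P C Phi ->
  loop_e2_0_stable Phi ->
  sangle P + sangle C <= pi ->
  sangle (closed_loop_G P Phi) <= Num.max (sangle P) (sangle C).
Proof.
move=> _ hP hC hW hL PC_pi.
have bP := cos_sangle_bound (stable_L2plus hP).
have bC := cos_sangle_bound (stable_L2plus hC).
have bG := cos_sangle_bound (closed_loop_L2plus hP hC hW hL).
have PC0 := acos_add_le_pi bP bC PC_pi.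
have : Num.min (cos_sangle P) (cos_sangle C) <= cos_sangle (closed_loop_G P Phi).
  apply: lb_le_inf (closed_loop_angle_set_neq0 hP hC hW hL) _ => r.
  exact: closed_loop_angle_ge.
rewrite /sangle -!/(cos_sangle _); have [_ PG|_ CG] := leP (cos_sangle P) (cos_sangle C).
  by rewrite le_max ler_acos ?PG.
by rewrite le_max orbC ler_acos ?CG.
Qed.
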